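(* Let $S\subset\mathbb{R}^n$ be an $r$-dimensional subspace, let $U$ be an $n\times r$ matrix whose columns form an orthonormal basis of $S$, let $y\in S^\perp$ be nonzero, let $\Omega=(\Omega(1),\dots,\Omega(m))$ be $m$ indices drawn independently and uniformly at random from $\{1,\dots,n\}$ (with replacement), let $\delta>0$ and $\beta=\sqrt{2\mu(y)\log(\frac1\delta)}$. Then with probability at least $1-\delta$, $$\|U_\Omega^Ty_\Omega\|_2^2\ \le\ (1+\beta)^2\,\frac{m}{n}\,\frac{r\mu(S)}{n}\,\|y\|_2^2 .$$
   Context: For a sample sequence $\Omega=(\Omega(1),\dots,\Omega(m))$ of indices in $\{1,\dots,n\}$, $y_\Omega\in\mathbb{R}^m$ is the vector with entries $y_{\Omega(i)}$, and $U_\Omega$ is the $m\times r$ matrix whose $i$-th row is the $\Omega(i)$-th row of $U$. $P_S$ is the orthogonal projection onto $S$; the coherence of $S$ is $\mu(S):=\frac{n}{r}\max_j\|P_Se_j\|_2^2$ with $e_j$ the standard basis vectors. For a nonzero vector $z\in\mathbb{R}^n$, $\mu(z)=\frac{n\|z\|_\infty^2}{\|z\|_2^2}$. *)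

From Stdlib Require Import Reals.
From mathcomp Require Import all_boot.
Set Implicit Arguments. Unset Strict Implicit. Unset Printing Implicit Defensive.

Local Open Scope R_scope.

Definition rsum (k : nat) (f : 'I_k -> R) : R := \big[Rplus/0]_(i < k) f i.

Definition sqnorm (k : nat) (x : 'I_k -> R) : R := rsum (fun i => x i * x i).

Definition infnorm (k : nat) (x : 'I_k -> R) : R := \big[Rmax/0]_(i < k) Rabs (x i).

Definition orthonormal_cols (n r : nat) (U : 'I_n -> 'I_r -> R) : Prop :=
  forall a b : 'I_r, rsum (fun i => U i a * U i b) = if a == b then 1 else 0.

Definition in_perp (n r : nat) (U : 'I_n -> 'I_r -> R) (y : 'I_n -> R) : Prop :=
  forall a : 'I_r, rsum (fun i => U i a * y i) = 0.

(* orthogonal projection onto S = range U (U orthonormal): P_S x = U (U^T x) *)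
Definition projS (n r : nat) (U : 'I_n -> 'I_r -> R) (x : 'I_n -> R) : 'I_n -> R :=
  fun i => rsum (fun a => U i a * rsum (fun k => U k a * x k)).

Definition e_vec (n : nat) (j : 'I_n) : 'I_n -> R :=
  fun i => if i == j then 1 else 0.

Definition coherence (n r : nat) (U : 'I_n -> 'I_r -> R) : R :=
  INR n / INR r * \big[Rmax/0]_(j < n) sqnorm (projS U (e_vec j)).

Definition vec_coherence (n : nat) (z : 'I_n -> R) : R :=
  INR n * (infnorm z) ^ 2 / sqnorm z.

(* || U_Omega^T y_Omega ||_2^2 for a sample sequence Omega of length m *)
Definition sampled_sqnorm (n r m : nat) (U : 'I_n -> 'I_r -> R) (y : 'I_n -> R)
  (Om : {ffun 'I_m -> 'I_n}) : R :=
  sqnorm (fun a : 'I_r => rsum (fun i : 'I_m => U (Om i) a * y (Om i))).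

Definition Rleb (x y : R) : bool := if Rle_dec x y then true else false.

(* probability under m i.i.d. uniform draws from {1..n} (with replacement):
   the uniform measure on the n^m sequences Omega *)
Definition prob_Omega (n m : nat) (E : {ffun 'I_m -> 'I_n} -> bool) : R :=
  INR #|[set Om : {ffun 'I_m -> 'I_n} | E Om]| / INR (n ^ m).

(* Write f(Om) = ||U_Om^T y_Om|| = ||sum_i y_(Om i) U^T e_(Om i)||.  Since y is orthogonal to S,
   every summand has mean zero under a uniform draw, so the cross terms vanish in expectation:
   E f^2 = (m/n) sum_j y_j^2 ||U^T e_j||^2 <= (m/n) (r mu(S)/n) ||y||^2 =: K, and E f <= sqrt K.
   Replacing one draw moves f by at most c = 2 ||y||_oo sqrt (r mu(S)/n) (triangle inequality),
   so McDiarmid's inequality -- Hoeffding's lemma applied along the Doob martingale of f --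
   gives P(f >= E f + t) <= exp (-2 t^2 / (m c^2)); for t = beta sqrt K this is
   exp (-beta^2 / (2 mu(y))) = delta. *)

From Pilot Require Import Defs.
From Stdlib Require Import Reals Lra Psatz.
From Coquelicot Require Import Coquelicot.
From mathcomp Require Import all_boot zify Rstruct.
(* [Rstruct] defines its own [Rleb]; importing [Defs] again makes [Rleb] denote the one of the
   statement. *)
Import Pilot.Defs.

Local Open Scope R_scope.

Lemma Rle_big (I : Type) (s : seq I) (P : pred I) (F G : I -> R) :
  (forall i, P i -> F i <= G i) ->
  \big[Rplus/0]_(i <- s | P i) F i <= \big[Rplus/0]_(i <- s | P i) G i.
Proof. by move=> FG; apply: (big_ind2 Rle) => //; [lra | move=> *; lra]. Qed.

Lemma Rle_0_big (I : Type) (s : seq I) (P : pred I) (F : I -> R) :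
  (forall i, P i -> 0 <= F i) -> 0 <= \big[Rplus/0]_(i <- s | P i) F i.
Proof. by move=> F_ge0; apply: (big_ind (Rle 0)) => //; [lra | move=> *; lra]. Qed.

Lemma iter_Rplus k c : iter k (Rplus c) 0 = INR k * c.
Proof. by elim: k => [|k IH]; rewrite ?iterS ?IH ?S_INR /=; ring. Qed.

Lemma Rle_bigmax {k} (F : 'I_k -> R) i : F i <= \big[Rmax/0]_(j < k) F j.
Proof.
have : i \in index_enum 'I_k by rewrite mem_index_enum.
elim: (index_enum _) => [|x s IH] //; rewrite inE big_cons => /orP [/eqP ->|/IH le_Fi].
  exact: Rmax_l.
exact: Rle_trans le_Fi (Rmax_r _ _).
Qed.

Lemma Rle_avg_add k (F G : 'I_k -> R) c : (0 < k)%N -> (forall j, F j <= G j + c) ->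
  / INR k * \big[Rplus/0]_(j < k) F j <= / INR k * \big[Rplus/0]_(j < k) G j + c.
Proof.
move=> k_gt0 FG.
have k_pos : 0 < INR k by apply/lt_0_INR/ltP.
have sum_le : \big[Rplus/0]_(j < k) F j <= \big[Rplus/0]_(j < k) (G j + c).
  by apply: Rle_big => j _.
have := Rmult_le_compat_l (/ INR k) _ _ (Rlt_le _ _ (Rinv_0_lt_compat _ k_pos)) sum_le.
rewrite big_split /= big_const iter_Rplus card_ord Rmult_plus_distr_l.
by rewrite (_ : / INR k * (INR k * c) = c) //; field; lra.
Qed.

Lemma big_mul_delta {k} (F : 'I_k -> R) j :
  \big[Rplus/0]_(i < k) (F i * (if i == j then 1 else 0)) = F j.
Proof.
rewrite (bigD1 j) //= eqxx big1 ?Rplus_0_r ?Rmult_1_r // => i /negbTE ->; ring.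
Qed.

(** * Hoeffding's lemma *)

Lemma le_of_derive_ge0 (f f' : R -> R) a b :
  (forall x, is_derive f x (f' x)) -> a <= b ->
  (forall x, a < x < b -> 0 <= f' x) -> f a <= f b.
Proof.
move=> f_deriv le_ab f'_ge0.
have [<-|ne_ab] := Req_dec a b; first lra.
have f_lim x := proj1 (is_derive_Reals f x (f' x)) (f_deriv x).
pose pr x : derivable_pt f x := exist _ (f' x) (f_lim x).
have [x [f_incr ax]] := MVT_cor1 f a b pr ltac:(lra).
rewrite (derive_pt_eq_0 f x (f' x) (pr x) (f_lim x)) in f_incr.
have : 0 <= f' x * (b - a) by apply: Rmult_le_pos; [apply: f'_ge0 | ]; lra.
by move=> ?; lra.
Qed.

(* Both [exp (l * a)] and [exp (l * b)] lie above the tangent of [exp] at [l * x]. *)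
Lemma exp_le_chord l a b x : a <= x <= b ->
  exp (l * x) * (b - a) <= (b - x) * exp (l * a) + (x - a) * exp (l * b).
Proof.
move=> axb.
have exp_a : exp (l * a) = exp (l * x) * exp (l * (a - x)).
  by rewrite -exp_plus; congr exp; ring.
have exp_b : exp (l * b) = exp (l * x) * exp (l * (b - x)).
  by rewrite -exp_plus; congr exp; ring.
have exp_x := exp_pos (l * x).
have tangent_a : exp (l * x) * (1 + l * (a - x)) <= exp (l * a).
  by rewrite exp_a; apply: Rmult_le_compat_l; [lra | apply: exp_ineq1_le].
have tangent_b : exp (l * x) * (1 + l * (b - x)) <= exp (l * b).
  by rewrite exp_b; apply: Rmult_le_compat_l; [lra | apply: exp_ineq1_le].
have := Rmult_le_compat_l (b - x) _ _ ltac:(lra) tangent_a.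
have := Rmult_le_compat_l (x - a) _ _ ltac:(lra) tangent_b.
nra.
Qed.

(* [tanh (y / 2) <= y / 2], cleared of denominators. *)
Lemma tanh_half_le y : 0 <= y -> exp y * (2 - y) <= 2 + y.
Proof.
move=> y_ge0.
suff : 2 + 0 - exp 0 * (2 - 0) <= 2 + y - exp y * (2 - y) by rewrite exp_0; lra.
apply: (le_of_derive_ge0 (fun t => 2 + t - exp t * (2 - t)) (fun t => 1 - exp t * (1 - t)) 0 y)
  => [t | // | t _]; first by auto_derive => //; ring.
have := exp_ineq1_le (- t); have := exp_pos t.
have : exp t * exp (- t) = 1 by rewrite -exp_plus Rplus_opp_r exp_0.
nra.
Qed.

(* The derivative of [log (1 - p + p e^u)] exceeds [p] by at most [u / 4].  With [s = e^(u/2)],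
   [(s + 1) * LHS = (s - 1) (1 - p + p s^2) - (s - 1) (1 - p (s + 1))^2], and
   [(s - 1) / (s + 1) = tanh (u / 4) <= u / 4]. *)
Lemma bernoulli_log_mgf_deriv_le p u : 0 <= p <= 1 -> 0 <= u ->
  p * exp u - p * (1 - p + p * exp u) <= u / 4 * (1 - p + p * exp u).
Proof.
move=> p01 u_ge0.
set s := exp (u / 2).
have exp_u : exp u = s * s by rewrite /s -exp_plus; congr exp; field.
have s_ge1 : 1 <= s by have := exp_ineq1_le (u / 2); rewrite -/s; lra.
have tanh_s : 4 * (s - 1) <= u * (s + 1).
  by have := tanh_half_le (u / 2) ltac:(lra); rewrite -/s; lra.
rewrite exp_u.
have sq_ge0 : 0 <= (s - 1) * (1 - p * (s + 1)) ^ 2.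
  by apply: Rmult_le_pos; [lra | apply: pow2_ge_0].
have p_s_ge0 : 0 <= p * (s * s - 1) by apply: Rmult_le_pos; nra.
apply: (Rmult_le_reg_l (s + 1)); first lra.
have : (s - 1) * (1 - p + p * (s * s)) <= u / 4 * (s + 1) * (1 - p + p * (s * s)).
  by apply: Rmult_le_compat_r; lra.
nra.
Qed.

Lemma hoeffding_bernoulli p u : 0 <= p <= 1 -> 0 <= u ->
  exp (- (p * u)) * (1 - p + p * exp u) <= exp (u ^ 2 / 8).
Proof.
move=> p01 u_ge0.
(* [G] starts at [1] and decreases, by [bernoulli_log_mgf_deriv_le]. *)
pose G t := (1 - p + p * exp t) * exp (- (p * t) - t * t / 8).
have G_decr : G u <= G 0.
  suff : - G 0 <= - G u by lra.
  apply: (le_of_derive_ge0 (fun t => - G t) (fun t => - (exp (- (p * t) - t * t / 8) *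
      (p * exp t - (p + t / 4) * (1 - p + p * exp t)))) 0 u) => [t | // | t [t_gt0 _]].
    rewrite /G; auto_derive => //.
    by rewrite (_ : - (p * t) + - (t * t * / 8) = - (p * t) - t * t / 8); field.
  have := bernoulli_log_mgf_deriv_le p t p01 (Rlt_le _ _ t_gt0).
  have := exp_pos (- (p * t) - t * t / 8); nra.
have G0 : G 0 = 1.
  by rewrite /G (_ : - (p * 0) - 0 * 0 / 8 = 0) ?exp_0; [ring | field].
have -> : exp (- (p * u)) = exp (- (p * u) - u * u / 8) * exp (u ^ 2 / 8).
  by rewrite -exp_plus; congr exp; field.
have := exp_pos (u ^ 2 / 8); rewrite G0 /G in G_decr; nra.
Qed.

Lemma avg_exp_le_two_point k (d : 'I_k -> R) lam a b :
  (0 < k)%N -> a < b -> (forall j, a <= d j <= b) -> \big[Rplus/0]_(j < k) d j = 0 ->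
  / INR k * \big[Rplus/0]_(j < k) exp (lam * d j) <=
  (b * exp (lam * a) - a * exp (lam * b)) / (b - a).
Proof.
move=> k_gt0 lt_ab d_ab d_sum0.
have k_pos : 0 < INR k by apply/lt_0_INR/ltP.
have sum_const x : \big[Rplus/0]_(j < k) x = INR k * x.
  by rewrite big_const iter_Rplus card_ord.
have chord : \big[Rplus/0]_(j < k) (exp (lam * d j) * (b - a)) <=
    \big[Rplus/0]_(j < k) ((b - d j) * exp (lam * a) + (d j - a) * exp (lam * b)).
  by apply: Rle_big => j _; apply: exp_le_chord.
rewrite -big_distrl /= big_split /= -!big_distrl /= in chord.
have sum_b : \big[Rplus/0]_(j < k) (b - d j) = INR k * b.
  rewrite (eq_bigr (fun j => b + (-1) * d j)); last by move=> j _; ring.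
  by rewrite big_split /= -big_distrr /= d_sum0 sum_const; ring.
have sum_a : \big[Rplus/0]_(j < k) (d j - a) = - (INR k * a).
  rewrite (eq_bigr (fun j => d j + (-1) * a)); last by move=> j _; ring.
  by rewrite big_split /= d_sum0 sum_const; ring.
rewrite sum_b sum_a in chord.
set S := \big[Rplus/0]_(j < k) exp (lam * d j) in chord *.
apply/(Rle_div_r _ _ (b - a)); first lra.
apply: (Rmult_le_reg_l (INR k)) => //.
have -> : INR k * (/ INR k * S * (b - a)) = S * (b - a) by field; lra.
by apply: Rle_trans chord _; right; ring.
Qed.

Lemma hoeffding_lemma k (d : 'I_k -> R) lam c :
  (0 < k)%N -> 0 <= lam -> 0 < c ->
  \big[Rplus/0]_(j < k) d j = 0 -> (forall j j', d j - d j' <= c) ->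
  / INR k * \big[Rplus/0]_(j < k) exp (lam * d j) <= exp ((lam * c) ^ 2 / 8).
Proof.
move=> k_gt0 lam_ge0 c_gt0 d_sum0 d_diff.
have k_pos : 0 < INR k by apply/lt_0_INR/ltP.
have [j1 _ min_j1] := order.Order.TotalTheory.arg_minP d (isT : xpredT (Ordinal k_gt0)).
set a := d j1.
have d_ac j : a <= d j <= a + c.
  by split; [apply/RleP/min_j1 | have := d_diff j j1; rewrite /a; lra].
have sum_const x : \big[Rplus/0]_(j < k) x = INR k * x.
  by rewrite big_const iter_Rplus card_ord.
have a_le0 : a <= 0.
  have : \big[Rplus/0]_(j < k) a <= \big[Rplus/0]_(j < k) d j.
    by apply: Rle_big => j _; case: (d_ac j).
  by rewrite d_sum0 sum_const; nra.
have ac_ge0 : 0 <= a + c.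
  have : \big[Rplus/0]_(j < k) d j <= \big[Rplus/0]_(j < k) (a + c).
    by apply: Rle_big => j _; case: (d_ac j).
  by rewrite d_sum0 sum_const; nra.
apply: Rle_trans (avg_exp_le_two_point _ d lam a (a + c) k_gt0 _ d_ac d_sum0) _; first lra.
set p := - a / c.
have p01 : 0 <= p <= 1.
  split; first by apply: Rmult_le_pos; [lra | left; apply: Rinv_0_lt_compat].
  by rewrite /p; apply/(Rle_div_l _ _ _ c_gt0); lra.
have a_eq : a = - (p * c) by rewrite /p; field; lra.
apply: Rle_trans (hoeffding_bernoulli p (lam * c) p01 ltac:(nra)).
have exp_a : exp (lam * a) = exp (- (p * (lam * c))) by rewrite a_eq; congr exp; ring.
have exp_ac : exp (lam * (a + c)) = exp (- (p * (lam * c))) * exp (lam * c).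
  by rewrite -exp_plus a_eq; congr exp; ring.
by rewrite exp_a exp_ac a_eq; right; field; lra.
Qed.

(** * McDiarmid's inequality for i.i.d. uniform draws *)

Section Draws.
Context {m n : nat}.
Hypothesis n_gt0 : (0 < n)%N.
Local Notation sample := {ffun 'I_m -> 'I_n}.

Let n_pos : 0 < INR n.
Proof. exact/lt_0_INR/ltP. Qed.

Let samples_pos : 0 < INR (n ^ m).
Proof. by apply/lt_0_INR/ltP; rewrite expn_gt0 n_gt0. Qed.

Definition set_draw (Om : sample) (k : nat) (j : 'I_n) : sample :=
  [ffun i => if val i == k then j else Om i].

Definition avg_draw (k : nat) (G : sample -> R) (Om : sample) : R :=
  / INR n * \big[Rplus/0]_(j < n) G (set_draw Om k j).

Definition expect (G : sample -> R) : R :=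
  / INR (n ^ m) * \big[Rplus/0]_(Om : sample) G Om.

Lemma set_draw_at Om (k : 'I_m) j : set_draw Om k j k = j.
Proof. by rewrite ffunE eqxx. Qed.

Lemma set_draw_other Om (k : 'I_m) j i : i != k -> set_draw Om k j i = Om i.
Proof.
by move=> ne_ik; rewrite ffunE; case: eqP => // /val_inj eq_ik; rewrite eq_ik eqxx in ne_ik.
Qed.

Lemma set_draw_out Om i j : (m <= i)%N -> set_draw Om i j = Om.
Proof.
by move=> le_mi; apply/ffunP => x; rewrite ffunE ltn_eqF // (leq_trans (ltn_ord x) le_mi).
Qed.

Lemma set_draw_set_draw Om k j j' : set_draw (set_draw Om k j) k j' = set_draw Om k j'.
Proof. by apply/ffunP => i; rewrite !ffunE; case: (val i == k). Qed.

Lemma set_drawC Om k k' j j' : k <> k' ->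
  set_draw (set_draw Om k j) k' j' = set_draw (set_draw Om k' j') k j.
Proof.
move=> ne_kk'; apply/ffunP => i; rewrite !ffunE.
case: (eqVneq (val i) k') => [eq_i | //].
by case: eqP => // eq_i'; rewrite -eq_i -eq_i' in ne_kk'.
Qed.

Lemma set_draw_eq Om (k : 'I_m) j : (set_draw Om k j == Om) = (Om k == j).
Proof.
apply/eqP/eqP => [<- | <-]; first by rewrite set_draw_at.
by apply/ffunP => i; rewrite ffunE; case: eqP => // /val_inj ->.
Qed.

Lemma avg_draw_ext k G G' Om :
  (forall Om, G Om = G' Om) -> avg_draw k G Om = avg_draw k G' Om.
Proof. by move=> eq_G; rewrite /avg_draw; congr (_ * _); apply: eq_bigr => j _. Qed.

Lemma avg_draw_set_draw k G Om j : avg_draw k G (set_draw Om k j) = avg_draw k G Om.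
Proof.
by rewrite /avg_draw; congr (_ * _); apply: eq_bigr => j' _; rewrite set_draw_set_draw.
Qed.

Lemma avg_drawMl k H G Om : (forall j, H (set_draw Om k j) = H Om) ->
  avg_draw k (fun O => H O * G O) Om = H Om * avg_draw k G Om.
Proof.
move=> H_inv; rewrite /avg_draw (eq_bigr (fun j => H Om * G (set_draw Om k j))).
  by rewrite -big_distrr /=; ring.
by move=> j _; rewrite H_inv.
Qed.

Lemma expect_ext G G' : (forall Om, G Om = G' Om) -> expect G = expect G'.
Proof. by move=> eq_G; rewrite /expect; congr (_ * _); apply: eq_bigr => Om _. Qed.

Lemma expect_le G G' : (forall Om, G Om <= G' Om) -> expect G <= expect G'.
Proof.
move=> le_G; rewrite /expect; apply: Rmult_le_compat_l; last exact: Rle_big.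
exact/Rlt_le/Rinv_0_lt_compat.
Qed.

Lemma expectMr G c : expect (fun Om => G Om * c) = expect G * c.
Proof. by rewrite /expect -big_distrl /=; ring. Qed.

Lemma expectD G G' : expect (fun Om => G Om + G' Om) = expect G + expect G'.
Proof. by rewrite /expect big_split /=; ring. Qed.

Lemma expect_sum (I : Type) (s : seq I) (G : I -> sample -> R) :
  expect (fun Om => \big[Rplus/0]_(x <- s) G x Om) = \big[Rplus/0]_(x <- s) expect (G x).
Proof. by rewrite /expect exchange_big /= big_distrr. Qed.

Lemma expect_cst G c : (forall Om, G Om = c) -> expect G = c.
Proof.
move=> G_cst; rewrite (expect_ext _ _ G_cst) /expect big_const iter_Rplus.
by rewrite card_ffun !card_ord; field; lra.
Qed.

Lemma expect_sq_le G : expect G * expect G <= expect (fun Om => G Om * G Om).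
Proof.
set e := expect G.
have var_ge0 : 0 <= expect (fun Om => (G Om - e) * (G Om - e)).
  by rewrite -(expect_cst (fun _ => 0) 0) //; apply: expect_le => Om; apply: Rle_0_sqr.
have var_eq : expect (fun Om => (G Om - e) * (G Om - e)) =
              expect (fun Om => G Om * G Om + G Om * (-2 * e) + e * e).
  by apply: expect_ext => Om; ring.
rewrite var_eq !expectD expectMr (expect_cst (fun _ => e * e) (e * e)) // -/e in var_ge0.
lra.
Qed.

Lemma sum_set_draw (k : 'I_m) (G : sample -> R) j :
  \big[Rplus/0]_(Om : sample) G (set_draw Om k j) =
  INR n * \big[Rplus/0]_(Om : sample | Om k == j) G Om.
Proof.
rewrite (partition_big (fun Om : sample => Om k) xpredT) //=.
rewrite (eq_bigr (fun _ => \big[Rplus/0]_(Om : sample | Om k == j) G Om)).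
  by rewrite big_const iter_Rplus card_ord.
move=> j0 _.
rewrite (reindex_onto (fun Om => set_draw Om k j0) (fun Om => set_draw Om k j)); last first.
  by move=> Om /eqP <-; rewrite set_draw_set_draw; apply/eqP; rewrite set_draw_eq.
apply: eq_big => Om; last by move=> /andP [_ /eqP ->].
by rewrite set_draw_at eqxx set_draw_set_draw set_draw_eq.
Qed.

Lemma expect_avg_draw k G : (k < m)%N -> expect (avg_draw k G) = expect G.
Proof.
move=> lt_km; pose k' := Ordinal lt_km.
rewrite /expect /avg_draw -big_distrr /= exchange_big /=.
rewrite (eq_bigr (fun j => INR n * \big[Rplus/0]_(Om : sample | Om k' == j) G Om)); last first.
  by move=> j _; rewrite -(sum_set_draw k').
rewrite -big_distrr /= [in RHS](partition_big (fun Om : sample => Om k') xpredT) //=.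
by rewrite -!Rmult_assoc; congr (_ * _); field; lra.
Qed.

Lemma prob_Omega_ge0 (E : pred sample) : 0 <= prob_Omega E.
Proof. by apply: Rle_mult_inv_pos => //; apply: pos_INR. Qed.

Lemma prob_Omega_compl_le (E : pred sample) d :
  prob_Omega (fun Om => ~~ E Om) <= d -> 1 - d <= prob_Omega E.
Proof.
have card_split :
    INR #|[set Om : sample | E Om]| + INR #|[set Om : sample | ~~ E Om]| = INR (n ^ m).
  rewrite -plus_INR plusE; congr INR.
  have -> : [set Om : sample | ~~ E Om] = ~: [set Om | E Om] by apply/setP => Om; rewrite !inE.
  by rewrite cardsC card_ffun !card_ord.
have : INR #|[set Om : sample | E Om]| / INR (n ^ m) +
       INR #|[set Om : sample | ~~ E Om]| / INR (n ^ m) = 1.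
  by rewrite /Rdiv -Rmult_plus_distr_r card_split Rinv_r //; lra.
rewrite /prob_Omega; lra.
Qed.

Lemma prob_Omega_le_expect (E : pred sample) G :
  (forall Om, 0 <= G Om) -> (forall Om, E Om -> 1 <= G Om) -> prob_Omega E <= expect G.
Proof.
move=> G_ge0 G_ge1.
have card_E : INR #|[set Om : sample | E Om]| =
              \big[Rplus/0]_(Om : sample) (if E Om then 1 else 0).
  by rewrite -big_mkcond big_const iter_Rplus cardsE Rmult_1_r.
rewrite /prob_Omega /expect card_E /Rdiv (Rmult_comm _ (/ _)); apply: Rmult_le_compat_l.
  exact/Rlt_le/Rinv_0_lt_compat.
by apply: Rle_big => Om _; case: ifP => [/G_ge1 | _].
Qed.

Fixpoint avg_last (s : nat) (f : sample -> R) : sample -> R :=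
  if s is s'.+1 then avg_draw (m - s'.+1) (avg_last s' f) else f.

(* [doob f k Om] averages out the draws [k, ..., m-1] of [Om]: it is the conditional
   expectation of [f] given the first [k] draws. *)
Definition doob (f : sample -> R) (k : nat) : sample -> R := avg_last (m - k) f.

Lemma avg_last_set_draw s f i Om j : (m - s <= i)%N ->
  avg_last s f (set_draw Om i j) = avg_last s f Om.
Proof.
elim: s i Om j => [|s IH] i Om j le_i /=; first by rewrite set_draw_out // -(subn0 m).
have [-> | ne_i] := eqVneq i (m - s.+1)%N; first exact: avg_draw_set_draw.
rewrite /avg_draw; congr (_ * _); apply: eq_bigr => j' _.
by rewrite set_drawC; [apply: IH; lia | apply/eqP].
Qed.

Lemma expect_avg_last s f : (s <= m)%N -> expect (avg_last s f) = expect f.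
Proof. by elim: s => [|s IH] le_sm //=; rewrite expect_avg_draw ?IH //; lia. Qed.

Lemma doob_rec f k Om : (k < m)%N -> doob f k Om = avg_draw k (doob f k.+1) Om.
Proof.
move=> lt_km; rewrite /doob (_ : m - k = (m - k.+1).+1)%N /=; last by lia.
by have -> : (m - (m - k.+1).+1 = k)%N by lia.
Qed.

Lemma doob_set_draw f k i Om j : (k <= i)%N -> doob f k (set_draw Om i j) = doob f k Om.
Proof. by move=> le_ki; apply: avg_last_set_draw; lia. Qed.

Lemma doob_last f Om : doob f m Om = f Om.
Proof. by rewrite /doob subnn. Qed.

Lemma const_of_set_draw_inv (g : sample -> R) :
  (forall Om i j, g (set_draw Om i j) = g Om) -> forall Om Om', g Om = g Om'.
Proof.
move=> g_inv Om Om'.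
pose mix d : sample := [ffun i => if (val i < d)%N then Om' i else Om i].
have mix_eq d : g (mix d) = g Om.
  elim: d => [|d <-]; first by congr g; apply/ffunP => i; rewrite ffunE.
  case: (ltnP d m) => [lt_dm | le_md].
    have -> : mix d.+1 = set_draw (mix d) d (Om' (Ordinal lt_dm)); last exact: g_inv.
    apply/ffunP => i; rewrite !ffunE ltnS leq_eqVlt.
    by case: eqVneq => [eq_id | _] //=; congr (Om' _); apply: val_inj.
  congr g; apply/ffunP => i; rewrite !ffunE.
  have lt_id : (val i < d)%N := leq_trans (ltn_ord i) le_md.
  by rewrite lt_id (leqW lt_id).
have mix_m : mix m = Om' by apply/ffunP => i; rewrite ffunE ltn_ord.
by rewrite -(mix_eq m) mix_m.
Qed.

Lemma doob_0 f Om : doob f 0 Om = expect f.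
Proof.
have doob0_cst := const_of_set_draw_inv (doob f 0)
  (fun Om i j => doob_set_draw f 0 i Om j (leq0n i)).
rewrite -(expect_avg_last m f (leqnn m)).
have -> : avg_last m f = doob f 0 by rewrite /doob subn0.
by symmetry; apply: expect_cst => Om'; apply: doob0_cst.
Qed.

Section BoundedDifferences.
Variables (f : sample -> R) (c : R).
Hypothesis f_bd :
  forall k Om j j', (k < m)%N -> f (set_draw Om k j) - f (set_draw Om k j') <= c.

Lemma avg_last_bounded_diff s k Om j j' : (k < m - s)%N ->
  avg_last s f (set_draw Om k j) - avg_last s f (set_draw Om k j') <= c.
Proof.
elim: s k Om j j' => [|s IH] k Om j j' lt_k /=; first by apply: f_bd; lia.
have ne_k : k <> (m - s.+1)%N by lia.
rewrite /avg_draw; apply/Rle_minus_l; rewrite Rplus_comm; apply: Rle_avg_add => // j0.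
rewrite (set_drawC _ _ _ j _ ne_k) (set_drawC _ _ _ j' _ ne_k).
by have := IH k (set_draw Om (m - s.+1) j0) j j' ltac:(lia); lra.
Qed.

Lemma doob_bounded_diff k Om j j' : (k < m)%N ->
  doob f k.+1 (set_draw Om k j) - doob f k.+1 (set_draw Om k j') <= c.
Proof. by move=> lt_km; apply: avg_last_bounded_diff; lia. Qed.

Hypothesis c_gt0 : 0 < c.
Variable lam : R.
Hypothesis lam_ge0 : 0 <= lam.

Lemma avg_draw_exp_doob_le k Om : (k < m)%N ->
  avg_draw k (fun O => exp (lam * (doob f k.+1 O - doob f k O))) Om <= exp ((lam * c) ^ 2 / 8).
Proof.
move=> lt_km; rewrite /avg_draw.
rewrite (eq_bigr (fun j => exp (lam * (doob f k.+1 (set_draw Om k j) - doob f k Om)))); last first.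
  by move=> j _; rewrite (doob_set_draw f k).
apply: hoeffding_lemma => // [|j j'].
  rewrite (eq_bigr (fun j => doob f k.+1 (set_draw Om k j) + (-1) * doob f k Om)); last first.
    by move=> j _; ring.
  rewrite big_split /= big_const iter_Rplus card_ord (doob_rec f k Om lt_km) /avg_draw.
  by set S := \big[Rplus/0]_(j < n) _; field; lra.
by have := doob_bounded_diff k Om j j' lt_km; lra.
Qed.

Lemma expect_exp_doob_le k : (k <= m)%N ->
  expect (fun Om => exp (lam * (doob f k Om - doob f 0 Om))) <= exp (INR k * ((lam * c) ^ 2 / 8)).
Proof.
elim: k => [|k IH] le_km.
  rewrite (expect_cst _ 1) ?Rmult_0_l ?exp_0; first lra.
  by move=> Om; rewrite Rminus_diag Rmult_0_r exp_0.
rewrite -(expect_avg_draw k) // S_INR Rmult_plus_distr_r Rmult_1_l exp_plus.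
have exp_split O : exp (lam * (doob f k.+1 O - doob f 0 O)) =
    exp (lam * (doob f k O - doob f 0 O)) * exp (lam * (doob f k.+1 O - doob f k O)).
  by rewrite -exp_plus; congr exp; ring.
apply: Rle_trans (_ : expect (fun Om => exp (lam * (doob f k Om - doob f 0 Om)) *
                                       exp ((lam * c) ^ 2 / 8)) <= _).
  apply: expect_le => Om; rewrite (avg_draw_ext _ _ _ _ exp_split) avg_drawMl; last first.
    by move=> j; rewrite !doob_set_draw.
  by apply: Rmult_le_compat_l; [exact/Rlt_le/exp_pos | exact: avg_draw_exp_doob_le].
rewrite expectMr; apply: Rmult_le_compat_r; first exact/Rlt_le/exp_pos.
by apply: IH; lia.
Qed.

End BoundedDifferences.

Theorem mcdiarmid (f : sample -> R) c t (E : pred sample) :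
  (0 < m)%N -> 0 < c -> 0 <= t ->
  (forall k Om j j', (k < m)%N -> f (set_draw Om k j) - f (set_draw Om k j') <= c) ->
  (forall Om, E Om -> expect f + t <= f Om) ->
  prob_Omega E <= exp (- (2 * t ^ 2) / (INR m * c ^ 2)).
Proof.
move=> m_gt0 c_gt0 t_ge0 f_bd f_large.
have m_pos : 0 < INR m by apply/lt_0_INR/ltP.
have mc2_pos : 0 < INR m * c ^ 2 by apply: Rmult_lt_0_compat => //; apply: pow_lt.
(* The Chernoff parameter minimising [exp (- lam t + m (lam c)^2 / 8)]. *)
pose lam := 4 * t / (INR m * c ^ 2).
have lam_ge0 : 0 <= lam by apply: Rmult_le_pos; [lra | exact/Rlt_le/Rinv_0_lt_compat].
apply: Rle_trans (_ : expect (fun Om => exp (lam * (doob f m Om - doob f 0 Om)) *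
                                       exp (- (lam * t))) <= _).
  apply: prob_Omega_le_expect => Om; first by apply/Rlt_le/Rmult_lt_0_compat; apply: exp_pos.
  move=> /f_large large; rewrite doob_last doob_0 -exp_plus.
  have : 0 <= lam * (f Om - expect f) + - (lam * t) by nra.
  by have := exp_ineq1_le (lam * (f Om - expect f) + - (lam * t)); lra.
rewrite expectMr.
apply: Rle_trans (Rmult_le_compat_r _ _ _ (Rlt_le _ _ (exp_pos _))
  (expect_exp_doob_le f c f_bd c_gt0 lam lam_ge0 m (leqnn m))) _.
by rewrite -exp_plus; right; congr exp; rewrite /lam; field; lra.
Qed.

End Draws.

(** * Sampling the rows of an orthonormal basis *)

Lemma sqnorm_ge0 {k} (x : 'I_k -> R) : 0 <= sqnorm x.
Proof. by apply: Rle_0_big => i _; apply: Rle_0_sqr. Qed.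

Lemma sqnorm_ext {k} (x x' : 'I_k -> R) : (forall i, x i = x' i) -> sqnorm x = sqnorm x'.
Proof. by move=> eq_x; apply: eq_bigr => i _; rewrite eq_x. Qed.

Lemma sqnorm_gt0 {k} (x : 'I_k -> R) : (exists i, x i <> 0) -> 0 < sqnorm x.
Proof.
case=> i xi_neq0; rewrite /sqnorm /rsum (bigD1 i) //=.
apply: Rplus_lt_le_0_compat; first exact: Rsqr_pos_lt.
by apply: Rle_0_big => j _; apply: Rle_0_sqr.
Qed.

Lemma Rle_abs_infnorm {k} (x : 'I_k -> R) i : Rabs (x i) <= infnorm x.
Proof. exact: (Rle_bigmax (fun j => Rabs (x j))). Qed.

Lemma infnorm_gt0 {k} (x : 'I_k -> R) : (exists i, x i <> 0) -> 0 < infnorm x.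
Proof. by case=> i xi_neq0; apply: Rlt_le_trans (Rle_abs_infnorm x i); apply: Rabs_pos_lt. Qed.

Lemma cauchy_schwarz {k} (v w : 'I_k -> R) :
  rsum (fun i => v i * w i) * rsum (fun i => v i * w i) <= sqnorm v * sqnorm w.
Proof.
rewrite /sqnorm /rsum !big_distrlr /=; apply/Rminus_le_0.
have lagrange : \big[Rplus/0]_(i < k) \big[Rplus/0]_(j < k) ((v i * w j - v j * w i) ^ 2) =
    \big[Rplus/0]_(i < k) \big[Rplus/0]_(j < k) (v i * v i * (w j * w j)) +
    \big[Rplus/0]_(i < k) \big[Rplus/0]_(j < k) (v j * v j * (w i * w i)) +
    -2 * \big[Rplus/0]_(i < k) \big[Rplus/0]_(j < k) (v i * w i * (v j * w j)).
  rewrite big_distrr -!big_split /=; apply: eq_bigr => i _.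
  by rewrite big_distrr -!big_split /=; apply: eq_bigr => j _; ring.
rewrite [X in _ + X + _]exchange_big /= in lagrange.
set D := \big[Rplus/0]_(i < k) \big[Rplus/0]_(j < k) ((v i * w j - v j * w i) ^ 2) in lagrange.
have D_ge0 : 0 <= D by do 2 (apply: Rle_0_big => ? _); apply: pow2_ge_0.
set A := \big[Rplus/0]_(i < k) \big[Rplus/0]_(j < k) (v i * v i * (w j * w j)) in lagrange *.
set B := \big[Rplus/0]_(i < k) \big[Rplus/0]_(j < k) (v i * w i * (v j * w j)) in lagrange *.
lra.
Qed.


Lemma sqrt_sqnorm_add_le {k} (v w : 'I_k -> R) :
  sqrt (sqnorm (fun i => v i + w i)) <= sqrt (sqnorm v) + sqrt (sqnorm w).
Proof.
have v_ge0 := sqnorm_ge0 v; have w_ge0 := sqnorm_ge0 w.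
have expand : sqnorm (fun i => v i + w i) = sqnorm v + 2 * rsum (fun i => v i * w i) + sqnorm w.
  by rewrite /sqnorm /rsum big_distrr /= -!big_split /=; apply: eq_bigr => i _; ring.
have dot_le : rsum (fun i => v i * w i) <= sqrt (sqnorm v) * sqrt (sqnorm w).
  rewrite -sqrt_mult //.
  have [dot_le0 | dot_gt0] := Rle_lt_dec (rsum (fun i => v i * w i)) 0.
    exact: Rle_trans dot_le0 (sqrt_pos _).
  rewrite -(sqrt_square (rsum _)); last lra.
  exact/sqrt_le_1_alt/cauchy_schwarz.
have sv := sqrt_sqrt _ v_ge0; have sw := sqrt_sqrt _ w_ge0.
have sv_ge0 := sqrt_pos (sqnorm v); have sw_ge0 := sqrt_pos (sqnorm w).
rewrite -(sqrt_square (sqrt (sqnorm v) + sqrt (sqnorm w))); last lra.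
by apply: sqrt_le_1_alt; rewrite expand; nra.
Qed.

Lemma not_Rleb_lt x y : ~~ Rleb x y -> y < x.
Proof. by rewrite /Rleb; case: Rle_dec => // nle _; apply: Rnot_le_lt. Qed.

Section Sampling.
Context {n r m : nat} (U : 'I_n -> 'I_r -> R) (y : 'I_n -> R).
Hypothesis hU : orthonormal_cols U.
Hypothesis hy : in_perp U y.
Hypothesis y_neq0 : exists i, y i <> 0.

Let n_gt0 : (0 < n)%N.
Proof. by case: y_neq0 => i _; apply: leq_ltn_trans (ltn_ord i). Qed.

Let n_pos : 0 < INR n.
Proof. exact/lt_0_INR/ltP. Qed.

(* [max_leverage] is [r * mu(S) / n], the largest squared norm of a row of [U]. *)
Definition max_leverage := \big[Rmax/0]_(j < n) sqnorm (projS U (e_vec j)).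

Lemma sqnorm_projS_e_vec j : sqnorm (projS U (e_vec j)) = rsum (fun a => U j a * U j a).
Proof.
have projS_e i : projS U (e_vec j) i = rsum (fun a => U i a * U j a).
  by apply: eq_bigr => a _; rewrite /rsum /e_vec big_mul_delta.
rewrite /sqnorm {1}/rsum (eq_bigr (fun i => \big[Rplus/0]_(a < r) \big[Rplus/0]_(b < r)
     (U j a * U j b * (U i a * U i b)))); last first.
  move=> i _; rewrite projS_e /rsum big_distrlr /=.
  by apply: eq_bigr => a _; apply: eq_bigr => b _; ring.
rewrite exchange_big /=; apply: eq_bigr => a _; rewrite exchange_big /=.
rewrite (eq_bigr (fun b => U j a * U j b * (if b == a then 1 else 0))) ?big_mul_delta //.
by move=> b _; rewrite -big_distrr /=; move: (hU a b); rewrite /rsum => ->; rewrite eq_sym.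
Qed.

Lemma row_sqnorm_le j : rsum (fun a => U j a * U j a) <= max_leverage.
Proof.
by rewrite -sqnorm_projS_e_vec; apply: (Rle_bigmax (fun j => sqnorm (projS U (e_vec j)))).
Qed.

Lemma max_leverage_ge0 : 0 <= max_leverage.
Proof. exact: Rle_trans (sqnorm_ge0 (U (Ordinal n_gt0))) (row_sqnorm_le (Ordinal n_gt0)). Qed.

Lemma max_leverage_gt0 : (0 < r)%N -> 0 < max_leverage.
Proof.
move=> r_gt0; pose a0 : 'I_r := Ordinal r_gt0.
have col_a0 := hU a0 a0; rewrite eqxx in col_a0.
case: (pickP (fun i => U i a0 != 0)) => [j /eqP Uja0_neq0 | col_a0_0].
  by apply: Rlt_le_trans (row_sqnorm_le j); apply: (sqnorm_gt0 (U j)); exists a0.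
move: col_a0; rewrite /rsum big1; first lra.
by move=> i _; move/negbFE/eqP: (col_a0_0 i) ->; ring.
Qed.

Lemma coherenceE : (0 < r)%N -> INR r * coherence U / INR n = max_leverage.
Proof.
move=> r_gt0; have r_pos : 0 < INR r by apply/lt_0_INR/ltP.
by rewrite /coherence -/max_leverage; field; lra.
Qed.

Definition draw_vec (j : 'I_n) (a : 'I_r) : R := U j a * y j.

Lemma sqnorm_draw_vec_le j : sqnorm (draw_vec j) <= y j * y j * max_leverage.
Proof.
have -> : sqnorm (draw_vec j) = y j * y j * rsum (fun a => U j a * U j a).
  by rewrite /sqnorm /rsum big_distrr /=; apply: eq_bigr => a _; rewrite /draw_vec; ring.
by apply: Rmult_le_compat_l; [apply: Rle_0_sqr | apply: row_sqnorm_le].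
Qed.

Lemma sqrt_sqnorm_draw_vec_le j : sqrt (sqnorm (draw_vec j)) <= infnorm y * sqrt max_leverage.
Proof.
apply: Rle_trans (sqrt_le_1_alt _ _ (sqnorm_draw_vec_le j)) _.
rewrite sqrt_mult ?sqrt_Rsqr_abs; [| exact: Rle_0_sqr | exact: max_leverage_ge0].
exact/Rmult_le_compat_r/Rle_abs_infnorm/sqrt_pos.
Qed.

(* Since [y] is orthogonal to [S], each coordinate of [draw_vec] averages to zero over a
   uniform draw, so distinct draws are uncorrelated. *)
Lemma expect_draw_pair (i i' : 'I_m) a :
  expect (fun Om : {ffun 'I_m -> 'I_n} => draw_vec (Om i) a * draw_vec (Om i') a) =
  if i == i' then / INR n * \big[Rplus/0]_(j < n) (draw_vec j a * draw_vec j a) else 0.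
Proof.
rewrite -(@expect_avg_draw m n n_gt0 i) //.
have [<- | ne_ii'] := eqVneq i i'.
  apply: (expect_cst n_gt0) => Om; rewrite /avg_draw; congr (_ * _).
  by apply: eq_bigr => j _; rewrite set_draw_at.
apply: (expect_cst n_gt0) => Om.
have swap O : draw_vec (O i) a * draw_vec (O i') a = draw_vec (O i') a * draw_vec (O i) a.
  exact: Rmult_comm.
rewrite (avg_draw_ext _ _ _ _ swap) avg_drawMl; last first.
  by move=> j; rewrite set_draw_other // eq_sym.
rewrite /avg_draw (eq_bigr (fun j => draw_vec j a)); last by move=> j _; rewrite set_draw_at.
by have := hy a; rewrite /rsum /draw_vec => ->; ring.
Qed.

Lemma expect_sampled_sqnorm :
  expect (sampled_sqnorm (m:=m) U y) = INR m / INR n * \big[Rplus/0]_(j < n) sqnorm (draw_vec j).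
Proof.
rewrite (expect_ext _ (fun Om => \big[Rplus/0]_(a < r) \big[Rplus/0]_(i < m)
            \big[Rplus/0]_(i' < m) (draw_vec (Om i) a * draw_vec (Om i') a))); last first.
  by move=> Om; apply: eq_bigr => a _; rewrite big_distrlr.
rewrite expect_sum (eq_bigr (fun a => INR m * (/ INR n *
    \big[Rplus/0]_(j < n) (draw_vec j a * draw_vec j a)))); last first.
  move=> a _; rewrite expect_sum (eq_bigr (fun i => / INR n *
      \big[Rplus/0]_(j < n) (draw_vec j a * draw_vec j a))).
    by rewrite big_const iter_Rplus card_ord.
  move=> i _; rewrite expect_sum (eq_bigr (fun i' => (/ INR n *
      \big[Rplus/0]_(j < n) (draw_vec j a * draw_vec j a)) * (if i' == i then 1 else 0))).
    exact: big_mul_delta.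
  by move=> i' _; rewrite expect_draw_pair eq_sym; case: (i' == i); ring.
by rewrite -big_distrr /= -big_distrr /= exchange_big /= Rmult_assoc.
Qed.

Lemma expect_sampled_sqnorm_le :
  expect (sampled_sqnorm (m:=m) U y) <= INR m / INR n * max_leverage * sqnorm y.
Proof.
rewrite expect_sampled_sqnorm Rmult_assoc; apply: Rmult_le_compat_l.
  by apply: Rle_mult_inv_pos => //; apply: pos_INR.
apply: Rle_trans (_ : _ <= \big[Rplus/0]_(j < n) (y j * y j * max_leverage)) _.
  by apply: Rle_big => j _; apply: sqnorm_draw_vec_le.
by rewrite -big_distrl /= Rmult_comm; right.
Qed.

Lemma expect_sampled_norm_le :
  expect (fun Om : {ffun 'I_m -> 'I_n} => sqrt (sampled_sqnorm U y Om)) <=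
  sqrt (INR m / INR n * max_leverage * sqnorm y).
Proof.
set f := fun Om => sqrt _.
have f_sq : expect (fun Om => f Om * f Om) = expect (sampled_sqnorm (m:=m) U y).
  by apply: expect_ext => Om; rewrite /f sqrt_sqrt //; apply: sqnorm_ge0.
have jensen := expect_sq_le n_gt0 f; rewrite f_sq in jensen.
apply: Rle_trans (RRle_abs _) _; rewrite -sqrt_Rsqr_abs.
exact/sqrt_le_1_alt/(Rle_trans _ _ _ jensen expect_sampled_sqnorm_le).
Qed.

Lemma sampled_norm_bounded_diff k (Om : {ffun 'I_m -> 'I_n}) j j' : (k < m)%N ->
  sqrt (sampled_sqnorm U y (set_draw Om k j)) - sqrt (sampled_sqnorm U y (set_draw Om k j'))
    <= 2 * infnorm y * sqrt max_leverage.
Proof.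
move=> lt_km; pose k' := Ordinal lt_km; rewrite -[k]/(nat_of_ord k').
pose rest a := \big[Rplus/0]_(i < m | i != k') draw_vec (Om i) a.
have split_draw jj :
    sampled_sqnorm U y (set_draw Om k' jj) = sqnorm (fun a => draw_vec jj a + rest a).
  apply: sqnorm_ext => a; rewrite /rsum (bigD1 k') // set_draw_at; congr Rplus.
  by apply: eq_bigr => i ne_ik; rewrite set_draw_other.
rewrite !split_draw.
have t1 := sqrt_sqnorm_add_le (draw_vec j) rest.
have t2 := sqrt_sqnorm_add_le (fun a => draw_vec j' a + rest a) (fun a => - draw_vec j' a).
have rest_eq : sqnorm (fun a => draw_vec j' a + rest a + - draw_vec j' a) = sqnorm rest.
  by apply: sqnorm_ext => a; ring.
have opp_eq : sqnorm (fun a => - draw_vec j' a) = sqnorm (draw_vec j').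
  by apply: eq_bigr => a _; ring.
rewrite rest_eq opp_eq in t2.
have := sqrt_sqnorm_draw_vec_le j; have := sqrt_sqnorm_draw_vec_le j'.
move=> *; lra.
Qed.

Lemma sampled_norm_ge_expect_add b (Om : {ffun 'I_m -> 'I_n}) : 0 <= b ->
  ~~ Rleb (sampled_sqnorm U y Om) ((1 + b) ^ 2 * (INR m / INR n) * max_leverage * sqnorm y) ->
  expect (fun Om : {ffun 'I_m -> 'I_n} => sqrt (sampled_sqnorm U y Om)) +
    b * sqrt (INR m / INR n * max_leverage * sqnorm y) <= sqrt (sampled_sqnorm U y Om).
Proof.
move=> b_ge0 /not_Rleb_lt lt_bound.
have le_expect := expect_sampled_norm_le.
set K := INR m / INR n * max_leverage * sqnorm y in lt_bound le_expect *.
have K_ge0 : 0 <= K.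
  apply: Rmult_le_pos; last exact: sqnorm_ge0.
  apply: Rmult_le_pos; last exact: max_leverage_ge0.
  by apply: Rle_mult_inv_pos => //; apply: pos_INR.
have lt_sqrt : (1 + b) * sqrt K < sqrt (sampled_sqnorm U y Om).
  rewrite -(sqrt_square (1 + b)); last lra.
  rewrite -sqrt_mult; [|nra|lra]; apply: sqrt_lt_1_alt; split; first nra.
  suff -> : (1 + b) * (1 + b) * K =
            (1 + b) ^ 2 * (INR m / INR n) * max_leverage * sqnorm y by [].
  by rewrite /K; ring.
rewrite Rmult_plus_distr_r Rmult_1_l in lt_sqrt; lra.
Qed.

Lemma sampled_sqnorm_tail b : (0 < r)%N -> 0 <= b ->
  prob_Omega (fun Om : {ffun 'I_m -> 'I_n} => ~~ Rleb (sampled_sqnorm U y Om)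
    ((1 + b) ^ 2 * (INR m / INR n) * (INR r * coherence U / INR n) * sqnorm y))
  <= exp (- (b ^ 2 / (2 * vec_coherence y))).
Proof.
move=> r_gt0 b_ge0; rewrite coherenceE //.
have [m0 | m_gt0] := posnP m.
  apply: Rle_trans (prob_Omega_le_expect n_gt0 _ (fun _ => 0) (fun _ => Rle_refl 0) _) _.
    move=> Om /not_Rleb_lt; rewrite [X in INR X]m0 INR_0 /Rdiv !Rmult_0_l !Rmult_0_r !Rmult_0_l.
    rewrite /sampled_sqnorm /sqnorm /rsum big1 => [|a _]; first lra.
    by rewrite big1 ?Rmult_0_l // => i; have := ltn_ord i; rewrite {2}m0.
  by rewrite (expect_cst n_gt0 _ 0) //; apply/Rlt_le/exp_pos.
have m_pos : 0 < INR m by apply/lt_0_INR/ltP.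
have lev_pos := max_leverage_gt0 r_gt0.
have y_pos := sqnorm_gt0 y y_neq0; have yinf_pos := infnorm_gt0 y y_neq0.
set K := INR m / INR n * max_leverage * sqnorm y.
have K_pos : 0 < K.
  by apply: Rmult_lt_0_compat => //; apply: Rmult_lt_0_compat => //; apply: Rdiv_lt_0_compat.
have c_pos : 0 < 2 * infnorm y * sqrt max_leverage.
  by apply: Rmult_lt_0_compat; [lra | apply: sqrt_lt_R0].
have t_ge0 : 0 <= b * sqrt K by apply: Rmult_le_pos; [| apply: sqrt_pos].
apply: Rle_trans (mcdiarmid n_gt0 _ _ _ _ m_gt0 c_pos t_ge0 sampled_norm_bounded_diff
  (fun Om => sampled_norm_ge_expect_add b Om b_ge0)) _.
right; congr exp; rewrite !Rpow_mult_distr !pow2_sqrt; [|lra|lra].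
by rewrite /K /vec_coherence; field; repeat split; lra.
Qed.

End Sampling.

Theorem lemma2 (n r m : nat) (U : 'I_n -> 'I_r -> R) (y : 'I_n -> R) (delta : R)
  (hr : (0 < r)%N)
  (hU : orthonormal_cols U)
  (hy : in_perp U y)
  (hy0 : exists i : 'I_n, y i <> 0)
  (hdelta : 0 < delta) :
  let beta := sqrt (2 * vec_coherence y * ln (1 / delta)) in
  1 - delta <=
   prob_Omega (fun Om : {ffun 'I_m -> 'I_n} =>
     Rleb (sampled_sqnorm U y Om)
          ((1 + beta) ^ 2 * (INR m / INR n) * (INR r * coherence U / INR n) * sqnorm y)).
Proof.
move=> beta; have [i0 _] := hy0.
have n_gt0 : (0 < n)%N := leq_ltn_trans (leq0n i0) (ltn_ord i0).
have [delta_ge1 | delta_lt1] := Rle_lt_dec 1 delta.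
  by apply: Rle_trans (prob_Omega_ge0 n_gt0 _); lra.
have L_pos : 0 < ln (1 / delta).
  rewrite -ln_1; apply: ln_increasing; first lra.
  by apply/(Rlt_div_r _ _ _ hdelta); lra.
have mu_pos : 0 < vec_coherence y.
  rewrite /vec_coherence; apply: Rdiv_lt_0_compat; last exact: sqnorm_gt0.
  by apply: Rmult_lt_0_compat; [apply/lt_0_INR/ltP | apply/pow_lt/infnorm_gt0].
apply: prob_Omega_compl_le n_gt0 _ _ _.
apply: Rle_trans (sampled_sqnorm_tail U y hU hy hy0 _ hr (sqrt_pos _)) _.
rewrite pow2_sqrt; last by apply: Rmult_le_pos; lra.
rewrite -[X in _ <= X](exp_ln _ hdelta); right; congr exp.
by rewrite ln_div ?ln_1; [field; lra | lra | lra].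
Qed.
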